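(* Let $\alpha\le1$ and $\theta=(\frac12,\alpha,\alpha)$. Let $\hat\mu\in\mathbb R_+^{|\mathcal N|\times|\mathcal I|}$ be an estimate of $(\mu_{ij})_{i\in\mathcal N,j\in\mathcal I}$, let $\hat P\in\arg\max_{P\in\mathcal P}W_\theta(\hat u(P))$ and $P^*\in\arg\max_{P\in\mathcal P}W_\theta(u(P))$, and let $$B(\hat\mu)=\max\Big(\max_{i\in[n]}\psi'(u_i(\hat P),\alpha),\ \max_{i\in[n]}\psi'(\hat u_i(P^* ),\alpha)\Big)$$ (with $B(\hat\mu)=+\infty$ if some argument is $0$ and $\alpha<1$). Then $$W_\theta(u(P^* ))-W_\theta(u(\hat P))\le 4B(\hat\mu)\sqrt{n\|v\|_2^2}\sqrt{\sum_{(i,j)\in\mathcal N\times\mathcal I}(\hat\mu_{ij}-\mu_{ij})^2}.$$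
   Context: Setup: users $\mathcal N=\{1,\dots,|\mathcal N|\}$, items $\mathcal I=\{|\mathcal N|+1,\dots,n\}$, $n=|\mathcal N|+|\mathcal I|$; exposure weights $v\in\mathbb R^{|\mathcal I|}$ with $v_1\ge\dots\ge v_{|\mathcal I|}\ge0$; values $\mu_{ij}\ge0$ for $i,j\in[n]$ ($\mu_{ij}$ for $i\in\mathcal N,j\in\mathcal I$ is the value of item $j$ to user $i$; $\mu_{ji}$ is the known value of user $i$ to item $j$, e.g. $\mu_{ji}=1$ in the exposure case). A ranking tensor is $P=(P_{ijk})_{i,j\in[n],k\in[|\mathcal I|]}$ with $P_{ijk}=0$ unless $i\in\mathcal N,j\in\mathcal I$, and each $P_i=(P_{ijk})_{j\in\mathcal I,k}$ doubly stochastic; $\mathcal P$ is the set of ranking tensors; $P_{ij}v=\sum_kP_{ijk}v_k$; true utilities $u_i(P)=\sum_{j=1}^n\mu_{ij}(P_{ij}+P_{ji})v$. Estimated utilities: $\hat u_i(P)=\sum_{j\in\mathcal I}\hat\mu_{ij}P_{ij}v$ for $i\in\mathcal N$ and $\hat u_j(P)=u_j(P)$ for $j\in\mathcal I$. Welfare: $\psi(x,\alpha)=x^\alpha$ ($\alpha>0$), $\log x$ ($\alpha=0$), $-x^\alpha$ ($\alpha<0$), with $\psi(0,\alpha)=-\infty$ for $\alpha\le0$; $\psi'(x,\alpha)$ is its derivative in $x$; $W_\theta(u)=(1-\lambda)\sum_{i\in\mathcal N}\psi(u_i,\alpha_1)+\lambda\sum_{j\in\mathcal I}\psi(u_j,\alpha_2)$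 for $\theta=(\lambda,\alpha_1,\alpha_2)$. *)

From HB Require Import structures.
From mathcomp Require Import all_boot all_order all_algebra.
From mathcomp Require Import all_classical all_reals.
From mathcomp Require Import ereal exp.
Set Implicit Arguments. Unset Strict Implicit. Unset Printing Implicit Defensive.
Import Order.TTheory GRing.Theory Num.Theory.
Local Open Scope ring_scope.

(* Users are 'I_nU, items are 'I_nI (so n = nU + nI).
   A ranking tensor is represented by P : 'I_nU -> 'I_nI -> 'I_nI -> R,
   P i j k = P_{ijk} for user i, item j, rank k (all other entries are 0). *)
Section Model.
Variable R : realType.
Variables nU nI : nat.

Definition ranking_tensor (P : 'I_nU -> 'I_nI -> 'I_nI -> R) : Prop :=
  forall i : 'I_nU,
    (forall j k, 0 <= P i j k) /\
    (forall j, \sum_(k < nI) P i j k = 1) /\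
    (forall k, \sum_(j < nI) P i j k = 1).

Definition Pv (P : 'I_nU -> 'I_nI -> 'I_nI -> R) (v : 'I_nI -> R) i j : R :=
  \sum_(k < nI) P i j k * v k.

Definition u_user (muU : 'I_nU -> 'I_nI -> R) v P (i : 'I_nU) : R :=
  \sum_(j < nI) muU i j * Pv P v i j.

(* utility of item j: sum_i mu_ji P_ij v  (mu_ji = value of user i to item j) *)
Definition u_item (muI : 'I_nI -> 'I_nU -> R) v P (j : 'I_nI) : R :=
  \sum_(i < nU) muI j i * Pv P v i j.

Definition psi (alpha x : R) : \bar R :=
  if 0 < alpha then (x `^ alpha)%:E
  else if x == 0 then -oo%E
  else if alpha == 0 then (ln x)%:E
  else (- x `^ alpha)%:E.

Definition psi' (alpha x : R) : \bar R :=
  if (x == 0) && (alpha < 1) then +oo%E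
  else if alpha == 0 then (x^-1)%:E
  else (`|alpha| * x `^ (alpha - 1))%:E.

(* W_theta for theta = (lambda, a1, a2) *)
Definition W (lambda a1 a2 : R) (uU : 'I_nU -> R) (uI : 'I_nI -> R) : \bar R :=
  ((1 - lambda)%:E * \sum_(i < nU) psi a1 (uU i) +
   lambda%:E * \sum_(j < nI) psi a2 (uI j))%E.

Definition emax (I : finType) (f : I -> \bar R) : \bar R :=
  \big[Order.max/-oo%E]_(i : I) f i.

End Model.

(* For alpha <= 1 the map x |-> psi(x, alpha) is concave on [0, +oo), so it lies
   below its tangent at every point x where psi'(x, alpha) is finite; if moreover
   psi'(x, alpha) <= B, then psi(y) <= psi(x) + B |y - x|.  Item utilities do not
   depend on the estimate, so comparing the true welfare at Pstar with the
   estimated one, then using the optimality of Phat for the estimated welfare,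
   and finally comparing the estimated welfare at Phat with the true one bounds
   the welfare gap by B/2 times the l1-distances between true and estimated user
   utilities at Pstar and at Phat.  By Cauchy-Schwarz each of these distances is
   at most sqrt(|N| ||v||^2) ||muhat - mu||, because sum_j (P_ij v)^2 <= ||v||^2
   for a doubly stochastic P_i (Jensen). *)

From HB Require Import structures.
From mathcomp Require Import all_boot all_order all_algebra.
From mathcomp Require Import all_classical all_reals.
From mathcomp Require Import ereal exp convex.
From mathcomp Require Import lra ring.
Import Order.TTheory GRing.Theory Num.Theory.
Local Open Scope ring_scope.
Set Implicit Arguments. Unset Strict Implicit. Unset Printing Implicit Defensive.

Section PsiTangent.
Variable R : realType.
Implicit Types (a b x y alpha : R).

Definition psiR alpha x : R :=
  if 0 < alpha then x `^ alpha else if alpha == 0 then ln x else - x `^ alpha.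

Definition psi'R alpha x : R :=
  if alpha == 0 then x^-1 else `|alpha| * x `^ (alpha - 1).

Lemma powR_le_tangent1 alpha a : 0 < alpha -> alpha <= 1 -> 0 < a ->
  a `^ alpha <= alpha * a + (1 - alpha).
Proof.
move=> alpha_gt0 alpha_le1 a_gt0.
have lin_gt0 : 0 < alpha * a + (1 - alpha).
  by apply: ltr_pwDl; [rewrite mulr_gt0 | rewrite subr_ge0].
have := @concave_ln R (Itv01 (ltW alpha_gt0) alpha_le1) a 1 a_gt0 ltr01.
rewrite !convRE /= ln1 mulr0 addr0 mulr1 => ln_conc.
by rewrite /powR gt_eqF // -[leRHS](lnK lin_gt0) ler_expR.
Qed.

Lemma powR_subr1_mul alpha x : 0 < x -> x `^ (alpha - 1) * x = x `^ alpha.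
Proof.
move=> x_gt0; rewrite -{2}(powRr1 (ltW x_gt0)) -powRD ?subrK //.
by apply/implyP => _; rewrite gt_eqF.
Qed.

Lemma ln_le_subr1 x : 0 < x -> ln x <= x - 1.
Proof. by move=> x_gt0; have := @le_ln1Dx R (x - 1); rewrite (addrC 1) subrK; apply; lra. Qed.

Lemma psiR_le_tangent alpha x y : alpha <= 1 -> 0 < x -> 0 < y ->
  psiR alpha y <= psiR alpha x + psi'R alpha x * (y - x).
Proof.
move=> alpha_le1 x_gt0 y_gt0; rewrite /psiR /psi'R.
set q := y / x; have q_gt0 : 0 < q by rewrite divr_gt0.
have yE : y = x * q by rewrite /q mulrCA divff ?gt_eqF // mulr1.
have gradE : x `^ (alpha - 1) * (y - x) = x `^ alpha * (q - 1).
  by rewrite -(powR_subr1_mul alpha x_gt0) -mulrA yE; congr (_ * _); rewrite mulrBr mulr1.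
have ypowE : y `^ alpha = x `^ alpha * q `^ alpha by rewrite yE powRM ?ltW.
have xpow_gt0 : 0 < x `^ alpha by rewrite powR_gt0.
have [alpha_gt0|alpha_lt0|_] := ltgtP 0 alpha.
- rewrite gtr0_norm // -mulrA gradE ypowE.
  have := powR_le_tangent1 alpha_gt0 alpha_le1 q_gt0; nra.
- rewrite ltr0_norm // -mulrA gradE ypowE.
  (* for a negative exponent the tangent bound comes from exp t >= 1 + t *)
  have : 1 + alpha * (q - 1) <= q `^ alpha.
    rewrite /powR gt_eqF //; apply: le_trans (expR_ge1Dx _).
    by rewrite lerD2l; apply: ler_wnM2l; [exact: (ltW alpha_lt0) | exact: ln_le_subr1].
  nra.
- have := ln_le_subr1 q_gt0; rewrite ln_div ?posrE //.
  have -> : x^-1 * (y - x) = q - 1 by rewrite mulrBr mulrC mulVf ?gt_eqF.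
  lra.
Qed.

Lemma psi'R_ge0 alpha x : 0 <= x -> 0 <= psi'R alpha x.
Proof.
by move=> x_ge0; rewrite /psi'R; case: ifP; rewrite ?invr_ge0 ?mulr_ge0 ?powR_ge0.
Qed.

Local Open Scope ereal_scope.

Lemma psiE_gt0 alpha x : (0 < x)%R -> psi alpha x = (psiR alpha x)%:E.
Proof. by move=> x_gt0; rewrite /psi /psiR (gt_eqF x_gt0); case: ifP => //; case: ifP. Qed.

Lemma psi'E_gt0 alpha x : (0 < x)%R -> psi' alpha x = (psi'R alpha x)%:E.
Proof. by move=> x_gt0; rewrite /psi' /psi'R (gt_eqF x_gt0) /=; case: ifP. Qed.

Lemma psi_le_tangent_gt0 alpha x y : (alpha <= 1)%R -> (0 < x)%R -> (0 <= y)%R ->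
  psi alpha y <= (psiR alpha x + psi'R alpha x * (y - x))%:E.
Proof.
move=> alpha_le1 x_gt0 y_ge0; have [y_gt0|y_le0] := ltrP 0 y.
  by rewrite psiE_gt0 // lee_fin psiR_le_tangent.
have -> : y = 0%R by apply/le_anti; rewrite y_le0 y_ge0.
rewrite /psi /psiR /psi'R; case: ifP => [alpha_gt0|_]; last by rewrite eqxx leNye.
rewrite powR0 ?gt_eqF // gtr0_norm // sub0r mulrN -mulrA powR_subr1_mul //.
by rewrite lee_fin -[X in (X - _)%R]mul1r -mulrBl mulr_ge0 ?subr_ge0 ?powR_ge0.
Qed.

Lemma psi'_ge0 alpha x : (0 <= x)%R -> 0 <= psi' alpha x.
Proof.
move=> x_ge0; have := psi'R_ge0 alpha x_ge0; rewrite /psi' /psi'R.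
by case: (_ && _); [rewrite leey | case: (alpha == 0%R); rewrite lee_fin].
Qed.

Lemma psi'_finite_cases alpha x : (0 <= x)%R -> (alpha <= 1)%R ->
  psi' alpha x != +oo -> (0 < x \/ alpha = 1)%R.
Proof.
move=> x_ge0 alpha_le1; rewrite /psi'.
have [x_gt0|x_le0] := ltrP 0 x; first by left.
have -> : x = 0%R by apply/le_anti; rewrite x_le0 x_ge0.
rewrite eqxx /=; have [//|alpha_ge1 _] := ltrP alpha 1.
by right; apply/le_anti; rewrite alpha_le1 alpha_ge1.
Qed.

Section Regular.
Variables alpha x : R.
Hypotheses (alpha_le1 : (alpha <= 1)%R) (x_ge0 : (0 <= x)%R).
Hypothesis x_regular : psi' alpha x != +oo.

Let x_gt0_or_alpha1 : (0 < x \/ alpha = 1)%R.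
Proof. exact: psi'_finite_cases. Qed.

Lemma psiE : psi alpha x = (psiR alpha x)%:E.
Proof.
case: x_gt0_or_alpha1 => [|->]; first exact: psiE_gt0.
by rewrite /psi /psiR ltr01.
Qed.

Lemma psi'E : psi' alpha x = (psi'R alpha x)%:E.
Proof.
case: x_gt0_or_alpha1 => [|->]; first exact: psi'E_gt0.
by rewrite /psi' /psi'R ltxx andbF oner_eq0.
Qed.

Lemma psi_le_tangent y : (0 <= y)%R ->
  psi alpha y <= (psiR alpha x + psi'R alpha x * (y - x))%:E.
Proof.
case: x_gt0_or_alpha1 => [x_gt0|alpha1 y_ge0]; first exact: psi_le_tangent_gt0.
rewrite alpha1 /psi /psiR /psi'R ltr01 oner_eq0 subrr powRr0 normr1 mulr1 mul1r.
by rewrite !powRr1 // lee_fin addrC subrK.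
Qed.

End Regular.

Lemma psi_le_psi_addDist alpha x y b : (alpha <= 1)%R -> (0 <= x)%R -> (0 <= y)%R ->
  psi' alpha x <= b%:E -> psi alpha y <= psi alpha x + (b * `|y - x|)%:E.
Proof.
move=> alpha_le1 x_ge0 y_ge0 grad_le_b.
have x_regular : psi' alpha x != +oo by rewrite lt_eqF // (le_lt_trans grad_le_b) ?ltry.
move: grad_le_b; rewrite (psi'E alpha_le1 x_ge0 x_regular) lee_fin => grad_le_b.
rewrite (psiE alpha_le1 x_ge0 x_regular).
apply: le_trans (psi_le_tangent alpha_le1 x_ge0 x_regular y_ge0) _.
rewrite -EFinD lee_fin lerD2l.
apply: le_trans (ler_wpM2l (psi'R_ge0 _ x_ge0) (ler_norm _)) _.
by rewrite ler_wpM2r.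
Qed.

End PsiTangent.

Section SumInequalities.
Variables (R : realType) (I : finType).
Implicit Types x y w z : I -> R.

Lemma sum_sqr_ge0 x : 0 <= \sum_i x i ^+ 2.
Proof. by apply: sumr_ge0 => i _; exact: sqr_ge0. Qed.

Lemma sum_sqr_eq0 x : \sum_i x i ^+ 2 = 0 -> forall i, x i = 0.
Proof.
move=> sum0 i; apply/eqP; rewrite -sqrf_eq0; apply/eqP.
by apply: (psumr_eq0P _ sum0) => // j _; exact: sqr_ge0.
Qed.

Lemma sum_CauchySchwarz x y :
  (\sum_i x i * y i) ^+ 2 <= (\sum_i x i ^+ 2) * (\sum_i y i ^+ 2).
Proof.
set Sx := \sum_i x i ^+ 2; set Sy := \sum_i y i ^+ 2; set Sxy := \sum_i x i * y i.
have [Sx_gt0|Sx_le0] := ltrP 0 Sx; last first.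
  have x0 : forall i, x i = 0.
    by apply: sum_sqr_eq0; apply/le_anti; rewrite Sx_le0 sum_sqr_ge0.
  rewrite /Sxy big1 => [|i _]; last by rewrite x0 mul0r.
  by rewrite expr0n /= mulr_ge0 ?sum_sqr_ge0.
(* minimize the quadratic [t |-> \sum_i (y i - t * x i) ^+ 2] *)
pose t := Sxy / Sx.
have : 0 <= \sum_i (y i - t * x i) ^+ 2 by exact: sum_sqr_ge0.
have -> : \sum_i (y i - t * x i) ^+ 2 = Sy - Sxy ^+ 2 / Sx.
  transitivity (Sy - 2 * t * Sxy + t ^+ 2 * Sx); last by rewrite /t; field; exact: lt0r_neq0.
  under eq_bigr => i _ do rewrite sqrrB.
  rewrite big_split /= sumrB !mulr_sumr; congr (_ - _ + _); apply: eq_bigr => i _.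
    by rewrite mulr2n; ring.
  by rewrite exprMn.
by rewrite subr_ge0 ler_pdivrMr // mulrC.
Qed.

Lemma sum_CauchySchwarz_sqrt x y :
  \sum_i x i * y i <= Num.sqrt (\sum_i x i ^+ 2) * Num.sqrt (\sum_i y i ^+ 2).
Proof.
apply: le_trans (ler_norm _) _.
rewrite -sqrtr_sqr -sqrtrM ?sum_sqr_ge0 // ler_sqrt ?sum_CauchySchwarz //.
by rewrite mulr_ge0 ?sum_sqr_ge0.
Qed.

Lemma sum_Jensen_sqr w z : (forall i, 0 <= w i) -> \sum_i w i = 1 ->
  (\sum_i w i * z i) ^+ 2 <= \sum_i w i * z i ^+ 2.
Proof.
move=> w_ge0 w_sum1.
have := sum_CauchySchwarz (fun i => Num.sqrt (w i)) (fun i => Num.sqrt (w i) * z i).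
under eq_bigr => i _ do rewrite mulrA -expr2 sqr_sqrtr //.
under [X in _ * X]eq_bigr => i _ do rewrite exprMn sqr_sqrtr //.
by under [X in X * _]eq_bigr => i _ do rewrite sqr_sqrtr //; rewrite w_sum1 mul1r.
Qed.

Lemma eq_of_sum_dist_le0 (f g : I -> R) : \sum_i `|f i - g i| <= 0 -> f = g.
Proof.
move=> sum_le0; have sum0 : \sum_i `|f i - g i| = 0.
  by apply/le_anti; rewrite sum_le0 sumr_ge0.
apply/funext => i; apply/eqP; rewrite -subr_eq0 -normr_eq0; apply/eqP.
by apply: (psumr_eq0P _ sum0).
Qed.

End SumInequalities.

Section Rankings.
Variables (R : realType) (nU nI : nat) (v : 'I_nI -> R).
Hypothesis v_ge0 : forall k, 0 <= v k.
Implicit Types P : 'I_nU -> 'I_nI -> 'I_nI -> R.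

Lemma Pv_ge0 P i j : ranking_tensor P -> 0 <= Pv P v i j.
Proof. by case/(_ i) => P_ge0 _; apply: sumr_ge0 => k _; exact: mulr_ge0. Qed.

Lemma u_user_ge0 muU P : (forall i j, 0 <= muU i j) -> ranking_tensor P ->
  forall i, 0 <= u_user muU v P i.
Proof. by move=> muU_ge0 rkP i; apply: sumr_ge0 => j _; rewrite mulr_ge0 ?Pv_ge0. Qed.

Lemma u_item_ge0 muI P : (forall j i, 0 <= muI j i) -> ranking_tensor P ->
  forall j, 0 <= u_item muI v P j.
Proof. by move=> muI_ge0 rkP j; apply: sumr_ge0 => i _; rewrite mulr_ge0 ?Pv_ge0. Qed.

(* Jensen on each row of [P i], then the column sums of [P i] are [1]. *)
Lemma sum_Pv_sqr_le P i : ranking_tensor P ->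
  \sum_j Pv P v i j ^+ 2 <= \sum_k v k ^+ 2.
Proof.
case/(_ i) => P_ge0 [row_sum1 col_sum1].
apply: le_trans (_ : \sum_j \sum_k P i j k * v k ^+ 2 <= _).
  by apply: ler_sum => j _; exact: sum_Jensen_sqr.
by rewrite exchange_big /=; under eq_bigr => k _ do rewrite -mulr_suml col_sum1 mul1r.
Qed.

Lemma sum_dist_u_user_le muU muhat P : ranking_tensor P ->
  \sum_i `|u_user muU v P i - u_user muhat v P i|
  <= Num.sqrt (nU%:R * \sum_k v k ^+ 2) *
     Num.sqrt (\sum_i \sum_j (muhat i j - muU i j) ^+ 2).
Proof.
move=> rkP.
apply: le_trans (_ : \sum_i \sum_j `|muhat i j - muU i j| * Pv P v i j <= _).
  apply: ler_sum => i _; rewrite /u_user -sumrB.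
  apply: le_trans (ler_norm_sum _ _ _) _; apply: ler_sum => j _.
  by rewrite -mulrBl normrM (ger0_norm (Pv_ge0 _ _ rkP)) distrC.
rewrite pair_bigA /= mulrC.
apply: le_trans (sum_CauchySchwarz_sqrt (fun p => `|muhat p.1 p.2 - muU p.1 p.2|)
                  (fun p => Pv P v p.1 p.2)) _.
apply: ler_pM; rewrite ?sqrtr_ge0 // ler_sqrt ?mulr_ge0 ?sum_sqr_ge0 //.
- rewrite -(pair_bigA _ (fun i j => `|muhat i j - muU i j| ^+ 2)) /=.
  apply: ler_sum => i _; apply: ler_sum => j _; by rewrite real_normK ?num_real.
- by apply: sumr_ge0 => i _; exact: sum_sqr_ge0.
- rewrite -(pair_bigA _ (fun i j => Pv P v i j ^+ 2)) /=.
  apply: le_trans (_ : \sum_(i < nU) \sum_k v k ^+ 2 <= _).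
    by apply: ler_sum => i _; exact: sum_Pv_sqr_le.
  by rewrite sumr_const card_ord mulr_natl.
Qed.

End Rankings.

Lemma emax_ge (R : realType) (I : finType) (f : I -> \bar R) i : (f i <= emax f)%E.
Proof. by rewrite /emax (bigD1 i) //= le_max lexx. Qed.

Section WelfareTangent.
Variables (R : realType) (nU nI : nat) (lambda a1 a2 : R).
Hypotheses (lambda_le1 : lambda <= 1) (a1_le1 : a1 <= 1).
Local Open Scope ereal_scope.

Lemma W_le_addDist (uU uU' : 'I_nU -> R) (uI : 'I_nI -> R) b :
  (forall i, 0 <= uU i)%R -> (forall i, 0 <= uU' i)%R ->
  (forall i, psi' a1 (uU i) <= b%:E) ->
  W lambda a1 a2 uU' uI <=
  W lambda a1 a2 uU uI + ((1 - lambda) * (b * \sum_i `|uU' i - uU i|))%:E.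
Proof.
move=> uU_ge0 uU'_ge0 grad_le_b; rewrite /W addeAC leeD2r // EFinM.
rewrite -muleDr ?fin_num_adde_defl // lee_wpmul2l ?lee_fin ?subr_ge0 //.
rewrite mulr_sumr -sumEFin -big_split /=; apply: lee_sum => i _.
exact: psi_le_psi_addDist.
Qed.

End WelfareTangent.

Section WelfareGap.
Variables (R : realType) (nU nI : nat) (v : 'I_nI -> R) (alpha : R).
Variables (muU muhat : 'I_nU -> 'I_nI -> R) (muI : 'I_nI -> 'I_nU -> R).
Variables Phat Pstar : 'I_nU -> 'I_nI -> 'I_nI -> R.
Hypotheses (v_ge0 : forall k, 0 <= v k) (alpha_le1 : alpha <= 1).
Hypotheses (muU_ge0 : forall i j, 0 <= muU i j) (muhat_ge0 : forall i j, 0 <= muhat i j).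
Hypotheses (Phat_rk : ranking_tensor Phat) (Pstar_rk : ranking_tensor Pstar).
Hypothesis Phat_opt : forall P, ranking_tensor P ->
  (W (1/2) alpha alpha (u_user muhat v P) (u_item muI v P)
   <= W (1/2) alpha alpha (u_user muhat v Phat) (u_item muI v Phat))%E.

Local Notation Wtrue mu P := (W (1/2) alpha alpha (u_user mu v P) (u_item muI v P)).
Local Notation dist P := (\sum_i `|u_user muU v P i - u_user muhat v P i|).

Lemma welfare_gap_le0 : dist Pstar <= 0 -> dist Phat <= 0 ->
  (Wtrue muU Pstar - Wtrue muU Phat <= 0)%E.
Proof.
move=> /eq_of_sum_dist_le0 Pstar_eq /eq_of_sum_dist_le0 Phat_eq.
by rewrite sube_le0 Pstar_eq Phat_eq Phat_opt.
Qed.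

Local Open Scope ereal_scope.

Lemma welfare_gap_le_dist b :
  (forall i, psi' alpha (u_user muU v Phat i) <= b%:E) ->
  (forall i, psi' alpha (u_user muhat v Pstar i) <= b%:E) ->
  Wtrue muU Pstar - Wtrue muU Phat <= (2^-1 * (b * (dist Pstar + dist Phat)))%:E.
Proof.
move=> grad_Phat grad_Pstar.
have half_le1 : (1 / 2 <= 1 :> R)%R by rewrite ler_pdivrMr // mul1r ler1n.
have half : (1 - 1 / 2 = 2^-1 :> R)%R by field.
rewrite lee_subel_addr //.
apply: le_trans (W_le_addDist _ half_le1 alpha_le1 _
  (u_user_ge0 v_ge0 muhat_ge0 Pstar_rk) (u_user_ge0 v_ge0 muU_ge0 Pstar_rk) grad_Pstar) _.
apply: le_trans (leeD2r _ (Phat_opt Pstar_rk)) _.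
apply: le_trans (leeD2r _ (W_le_addDist _ half_le1 alpha_le1 _
  (u_user_ge0 v_ge0 muU_ge0 Phat_rk) (u_user_ge0 v_ge0 muhat_ge0 Phat_rk) grad_Phat)) _.
rewrite -addeA addeC; apply: leeD2r; rewrite -EFinD lee_fin half.
by under eq_bigr do rewrite distrC; rewrite -!mulrDr addrC.
Qed.

Lemma welfare_gap_le_mul (B : \bar R) (L : R) : ((0 < L)%R -> 0 <= B) ->
  (dist Pstar <= L)%R -> (dist Phat <= L)%R ->
  (forall i, psi' alpha (u_user muU v Phat i) <= B) ->
  (forall i, psi' alpha (u_user muhat v Pstar i) <= B) ->
  Wtrue muU Pstar - Wtrue muU Phat <= B * L%:E.
Proof.
move=> B_ge0 dist_Pstar dist_Phat.
have [L_le0|L_gt0] := lerP L 0.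
  have -> : L = 0%R by apply/le_anti; rewrite L_le0 (le_trans _ dist_Phat) ?sumr_ge0.
  rewrite mule0 => _ _; apply: welfare_gap_le0.
    exact: le_trans dist_Pstar L_le0.
  exact: le_trans dist_Phat L_le0.
case: B {B_ge0}(B_ge0 L_gt0) => [b b_ge0 grad_Phat grad_Pstar|_ _ _|//].
  apply: le_trans (welfare_gap_le_dist grad_Phat grad_Pstar) _.
  rewrite -EFinM lee_fin; rewrite lee_fin in b_ge0; nra.
by rewrite gt0_mulye ?leey.
Qed.

End WelfareGap.

Theorem mainTheorem11 (R : realType) (nU nI : nat)
  (v : 'I_nI -> R)
  (muU : 'I_nU -> 'I_nI -> R) (muI : 'I_nI -> 'I_nU -> R)
  (muhat : 'I_nU -> 'I_nI -> R)
  (alpha : R)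
  (Phat Pstar : 'I_nU -> 'I_nI -> 'I_nI -> R) :
  (forall k k' : 'I_nI, (k <= k')%N -> v k' <= v k) ->
  (forall k, 0 <= v k) ->
  (forall i j, 0 <= muU i j) ->
  (forall j i, 0 <= muI j i) ->
  (forall i j, 0 <= muhat i j) ->
  alpha <= 1 ->
  ranking_tensor Phat ->
  (forall P, ranking_tensor P ->
     (W (1/2) alpha alpha (u_user muhat v P) (u_item muI v P)
      <= W (1/2) alpha alpha (u_user muhat v Phat) (u_item muI v Phat))%E) ->
  ranking_tensor Pstar ->
  (forall P, ranking_tensor P ->
     (W (1/2) alpha alpha (u_user muU v P) (u_item muI v P)
      <= W (1/2) alpha alpha (u_user muU v Pstar) (u_item muI v Pstar))%E) ->
  let B : \bar R :=
    Order.max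
      (Order.max (emax (fun i => psi' alpha (u_user muU v Phat i)))
                 (emax (fun j => psi' alpha (u_item muI v Phat j))))
      (Order.max (emax (fun i => psi' alpha (u_user muhat v Pstar i)))
                 (emax (fun j => psi' alpha (u_item muI v Pstar j)))) in
  (W (1/2) alpha alpha (u_user muU v Pstar) (u_item muI v Pstar)
   - W (1/2) alpha alpha (u_user muU v Phat) (u_item muI v Phat)
   <= B * (4 * Num.sqrt ((nU + nI)%:R * \sum_(k < nI) v k ^+ 2)
             * Num.sqrt (\sum_(i < nU) \sum_(j < nI) (muhat i j - muU i j) ^+ 2))%:E)%E.
Proof.
move=> _ v_ge0 muU_ge0 muI_ge0 muhat_ge0 alpha_le1 Phat_rk Phat_opt Pstar_rk _.
cbv zeta; set B := Order.max _ _.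
have grad_Phat i : (psi' alpha (u_user muU v Phat i) <= B)%E by rewrite !le_max emax_ge.
have grad_item j : (psi' alpha (u_item muI v Phat j) <= B)%E by rewrite !le_max emax_ge ?orbT.
have grad_Pstar i : (psi' alpha (u_user muhat v Pstar i) <= B)%E by rewrite !le_max emax_ge ?orbT.
set S1 := \sum_(k < nI) v k ^+ 2; set K := (4 * _ * _)%R.
have S1_ge0 : 0 <= S1 by exact: sum_sqr_ge0.
have dist_le P : ranking_tensor P -> \sum_i `|u_user muU v P i - u_user muhat v P i| <= K.
  move=> rkP; apply: le_trans (sum_dist_u_user_le v_ge0 _ _ rkP) _.
  rewrite /K; apply: ler_wpM2r; first exact: sqrtr_ge0.
  have : Num.sqrt (nU%:R * S1) <= Num.sqrt ((nU + nI)%:R * S1).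
    by rewrite ler_sqrt ?mulr_ge0 // ler_wpM2r // ler_nat leq_addr.
  have := sqrtr_ge0 ((nU + nI)%:R * S1); lra.
apply: (welfare_gap_le_mul (muhat := muhat)); rewrite ?dist_le //.
move=> K_gt0; have : (0 < nU + nI)%N.
  by rewrite lt0n; apply: contraTneq K_gt0 => nUI0; rewrite /K nUI0 mul0r sqrtr0 mulr0 mul0r ltxx.
case: (posnP nU) => [->|nU_gt0] nUI_gt0.
  by apply: le_trans (grad_item (Ordinal nUI_gt0)); rewrite psi'_ge0 ?u_item_ge0.
by apply: le_trans (grad_Phat (Ordinal nU_gt0)); rewrite psi'_ge0 ?u_user_ge0.
Qed.
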